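(* For every expression $e$ and every $d\in\mathbb{N}$: if $\mathrm{WF}_d(e)$ then $\uparrow_d\downarrow_d e = e$.
   Context: Expressions are terms $e ::= \lambda.\,e \mid (e\ e)\mid \$i \mid \&i\mid t$, where $\$i$ ($i\in\mathbb{N}$) is a de Bruijn index, $\&i$ ($i\in\mathbb{Z}$) is a special ''overshifted'' variable, and $t$ ranges over primitive symbols. Downshift: $\downarrow_d(\lambda.b)=\lambda.\downarrow_{d+1}b$; $\downarrow_d(f\ x)=(\downarrow_d f)(\downarrow_d x)$; $\downarrow_d\$i=\$i$ if $i<d$, $\$(i-1)$ if $i>d$, $\&(i-1)$ if $i=d$; $\downarrow_d\&i=\&(i-1)$; $\downarrow_d t=t$. Upshift: $\uparrow_d(\lambda.b)=\lambda.\uparrow_{d+1}b$; $\uparrow_d(f\ x)=(\uparrow_d f)(\uparrow_d x)$; $\uparrow_d\$i=\$i$ if $i<d$, $\$(i+1)$ if $i\ge d$; $\uparrow_d\&i=\&(i+1)$ if $i+1\ne d$, $\$(i+1)$ if $i+1=d$; $\uparrow_d t=t$. Well-formedness at depth $d$: $\mathrm{WF}_d(\lambda.b)=\mathrm{WF}_{d+1}(b)$; $\mathrm{WF}_d(f\ x)=\mathrm{WF}_d(f)\wedge\mathrm{WF}_d(x)$; $\mathrm{WF}_d(\$i)$ true; $\mathrm{WF}_d(\&i)$ true iff $i<d$; $\mathrm{WF}_d(t)$ true. *)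

From Stdlib Require Import Arith ZArith.

(* Expressions: lambda (de Bruijn), application, bound var $i (i : nat),
   overshifted var &i (i : Z), primitive symbol t (from an arbitrary type Sym). *)
Inductive expr (Sym : Type) : Type :=
| Lam : expr Sym -> expr Sym
| App : expr Sym -> expr Sym -> expr Sym
| Var : nat -> expr Sym
| Over : Z -> expr Sym
| Prim : Sym -> expr Sym.

Arguments Lam {Sym} _.
Arguments App {Sym} _ _.
Arguments Var {Sym} _.
Arguments Over {Sym} _.
Arguments Prim {Sym} _.

Fixpoint downshift {Sym : Type} (d : nat) (e : expr Sym) : expr Sym :=
  match e with
  | Lam b => Lam (downshift (S d) b)
  | App f x => App (downshift d f) (downshift d x)
  | Var i =>
      if Nat.ltb i d then Var i
      else if Nat.ltb d i then Var (i - 1)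
      else Over (Z.of_nat i - 1)%Z
  | Over i => Over (i - 1)%Z
  | Prim t => Prim t
  end.

Fixpoint upshift {Sym : Type} (d : nat) (e : expr Sym) : expr Sym :=
  match e with
  | Lam b => Lam (upshift (S d) b)
  | App f x => App (upshift d f) (upshift d x)
  | Var i => if Nat.ltb i d then Var i else Var (S i)
  | Over i =>
      if Z.eqb (i + 1)%Z (Z.of_nat d) then Var (Z.to_nat (i + 1))
      else Over (i + 1)%Z
  | Prim t => Prim t
  end.

Fixpoint WF {Sym : Type} (d : nat) (e : expr Sym) : Prop :=
  match e with
  | Lam b => WF (S d) b
  | App f x => WF d f /\ WF d x
  | Var _ => True
  | Over i => (i < Z.of_nat d)%Z
  | Prim _ => True
  end.

From Stdlib Require Import Arith ZArith Lia.

Lemma upshift_downshift_Var (Sym : Type) (d i : nat) :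
  upshift d (downshift d (@Var Sym i)) = Var i.
Proof.
  simpl; destruct (Nat.ltb_spec i d) as [Hid | Hdi].
  - simpl; rewrite (proj2 (Nat.ltb_lt i d) Hid); reflexivity.
  - destruct (Nat.ltb_spec d i) as [Hlt | Hge]; simpl.
    + destruct (Nat.ltb_spec (i - 1) d); [lia | f_equal; lia].
    + assert (i = d) by lia; subst i.
      replace (Z.of_nat d - 1 + 1)%Z with (Z.of_nat d) by lia.
      rewrite Z.eqb_refl, Nat2Z.id; reflexivity.
Qed.

(* Without the bound, &d would be sent to &(d-1) and then upshifted to $d. *)
Lemma upshift_downshift_Over (Sym : Type) (d : nat) (i : Z) :
  (i < Z.of_nat d)%Z -> upshift d (downshift d (@Over Sym i)) = Over i.
Proof.
  intros Hid; simpl.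
  destruct (Z.eqb_spec (i - 1 + 1) (Z.of_nat d)); [lia | f_equal; lia].
Qed.

Theorem lemmaB3 (Sym : Type) (e : expr Sym) (d : nat) :
  WF d e -> upshift d (downshift d e) = e.
Proof.
  revert d; induction e as [b IHb | f IHf x IHx | i | i | t]; intros d Hwf.
  - simpl; f_equal; exact (IHb (S d) Hwf).
  - destruct Hwf as [Hf Hx]; simpl; f_equal; auto.
  - apply upshift_downshift_Var.
  - apply upshift_downshift_Over; exact Hwf.
  - reflexivity.
Qed.
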